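(* Let $\mathcal H$ be a separable Hilbert space, $(X,\mathcal M,\mu)$ a $\sigma$-finite measure space, and $\{\phi_t\}_{t\in X}$ a continuous Bessel family over $X$ in $\mathcal H$. Let $\mathcal M'\subset\mathcal M$ be the $\sigma$-algebra generated by the sets $\{t\in X:\phi_t\in U\}$, where $U$ ranges over open subsets of $\mathcal H$. Then the measure algebra associated with $(X,\mathcal M',\mu)$ is separable.
   Context: A family $\{\phi_t\}_{t\in X}$ of vectors in $\mathcal H$ is a continuous Bessel family (with bound $B$) over the measure space $(X,\mu)$ if (i) for each $f\in\mathcal H$ the function $t\mapsto\langle f,\phi_t\rangle$ is measurable, and (ii) there is $B<\infty$ with $\int_X|\langle f,\phi_t\rangle|^2\,d\mu(t)\le B\|f\|^2$ for all $f\in\mathcal H$. The measure algebra of a measure space $(X,\mathcal N,\mu)$ consists of equivalence classes of sets in $\mathcal N$ under $E\sim F\iff\mu(E\triangle F)=0$; it is called separable if the set of (classes of) sets of finite measure with the metric $\rho(E,F)=\mu(E\triangle F)$ is a separable metric space. *)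

From HB Require Import structures.
From mathcomp Require Import all_boot all_order all_algebra.
From mathcomp Require Import all_classical all_reals all_analysis.
From mathcomp Require Import complex.

Set Implicit Arguments.
Unset Strict Implicit.
Unset Printing Implicit Defensive.

Import Order.TTheory GRing.Theory Num.Theory.
Import numFieldNormedType.Exports.

Local Open Scope classical_set_scope.
Local Open Scope ring_scope.

(* A complex Hilbert space: a complete real normed space H (this gives the
   norm topology and completeness) equipped with a complex scalar action
   extending the real one and a complex inner product (linear in the first
   argument, conjugate symmetric) inducing the norm. *)
Record complex_hilbert (R : realType) (H : completeNormedModType R) :=
  ComplexHilbert {
  csc : R[i] -> H -> H;
  ip : H -> H -> R[i];
  csc_real : forall (r : R) (x : H), csc (r%:C)%C x = r *: x;
  csc_mul : forall (a b : R[i]) (x : H), csc (a * b) x = csc a (csc b x);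
  csc_addr : forall (a : R[i]) (x y : H), csc a (x + y) = csc a x + csc a y;
  csc_addl : forall (a b : R[i]) (x : H), csc (a + b) x = csc a x + csc b x;
  ip_linl : forall (a : R[i]) (x y z : H),
      ip (csc a x + y) z = a * ip x z + ip y z;
  ip_conj : forall x y : H, ip y x = ((ip x y)^*)%C;
  ip_norm : forall x : H, ip x x = ((`|x| ^+ 2)%:C)%C }.

Definition separable_space (T : topologicalType) :=
  exists D : set T, countable D /\ closure D = [set: T].

Definition sqmod (R : realType) (z : R[i]) : R :=
  (complex.Re z) ^+ 2 + (complex.Im z) ^+ 2.

(* Continuous Bessel family over (X, mu) in H. Measurability of the
   complex-valued function t |-> <f, phi_t> is measurability of its real and
   imaginary parts (Borel sigma-algebra of C = R^2). *)
Definition continuous_bessel (R : realType) (d : measure_display)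
  (X : measurableType d) (mu : {measure set X -> \bar R})
  (H : completeNormedModType R) (hs : complex_hilbert H) (phi : X -> H) :=
  (forall f : H,
      measurable_fun setT (fun t => complex.Re (ip hs f (phi t))) /\
      measurable_fun setT (fun t => complex.Im (ip hs f (phi t)))) /\
  exists B : R, forall f : H,
    (\int[mu]_t (sqmod (ip hs f (phi t)))%:E <= (B * `|f| ^+ 2)%:E)%E.

Definition symdiff (T : Type) (A B : set T) : set T := (A `\` B) `|` (B `\` A).

(* The measure algebra of (X, M, mu) is separable: the sets of M with finite
   measure, with pseudometric rho(E,F) = mu(E symdiff F), form a separable
   (pseudo)metric space, i.e. admit a countable dense subfamily. *)
Definition measure_algebra_separable (R : realType) (X : Type)
  (M : set (set X)) (mu : set X -> \bar R) :=
  exists D : set (set X),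
    countable D /\
    D `<=` [set E | M E /\ (mu E < +oo)%E] /\
    forall E, M E -> (mu E < +oo)%E ->
      forall eps : R, 0 < eps ->
        exists2 F, D F & (mu (symdiff E F) < eps%:E)%E.

From HB Require Import structures.
From mathcomp Require Import all_boot all_order all_algebra.
From mathcomp Require Import all_classical all_reals all_analysis.
From mathcomp Require Import complex ring lra measurable_realfun.

Set Implicit Arguments.
Unset Strict Implicit.
Unset Printing Implicit Defensive.

Import Order.TTheory GRing.Theory Num.Theory.
Import numFieldNormedType.Exports.

Local Open Scope classical_set_scope.
Local Open Scope ring_scope.

(* Fix a dense sequence (e_n) of H.  Every open set of H is a countable union
   of balls B(e_n, 1/(m+1)), so M' is generated by the countably many sets
   phi^-1 B(e_n, 1/(m+1)); these are mu-measurable because |phi t - x| can be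
   read off from the measurable coordinates Re <e_n, phi t>.  On a set S of
   finite measure, every set of the sigma-algebra generated by a countable
   family G is approximated in mu(_ `&` S) by finite Boolean combinations of G,
   since the sets so approximable form a sigma-algebra.  By the Bessel bound and
   Chebyshev's inequality the sets S_N where some |Re <e_n, phi t>|, n < N,
   exceeds 1/(N+1) have finite measure, and they exhaust {phi <> 0}.  Finally
   sets of M' are unions of fibres of phi, so a set E of M' contains
   Z = {phi = 0} or misses it.  Hence E is approximated by (C `&` S_N) `|` Z or
   by C `&` S_N, with C a Boolean combination: countably many candidates. *)

Section symdiff.
Context {T : Type}.
Implicit Types A B C Z : set T.

Lemma symdiff_triangle A B C : symdiff A C `<=` symdiff A B `|` symdiff B C.
Proof. by move=> x; rewrite /symdiff /setD /=; have := pselect (B x); tauto. Qed.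

Lemma symdiffCC A B : symdiff (~` A) (~` B) = symdiff A B.
Proof.
apply/seteqP; split=> x; rewrite /symdiff /setD /=;
  by have := pselect (A x); have := pselect (B x); tauto.
Qed.

Lemma symdiffUU A B C D :
  symdiff (A `|` B) (C `|` D) `<=` symdiff A C `|` symdiff B D.
Proof. by move=> x; rewrite /symdiff /setD /=; tauto. Qed.

Lemma symdiff_setD A B : B `<=` A -> symdiff A B = A `\` B.
Proof.
move=> BA; apply/seteqP; split=> x; last by left.
by move=> [//|[/BA]].
Qed.

Lemma symdiff_patch A C S Z :
  S `<=` ~` Z ->
  symdiff A ((C `&` S) `|` (A `&` Z)) `<=`
    (symdiff A C `&` S) `|` ((A `&` ~` Z) `\` S).
Proof.
move=> SZ x; have := SZ x; rewrite /symdiff /setD /setI /setU /setC /=.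
by have := pselect (Z x); have := pselect (S x); tauto.
Qed.

End symdiff.

Lemma sigma_preimage_saturated {T U : Type} (f : T -> U) (C : set (set U))
    (E : set T) :
  <<s [set f @^-1` A | A in C] >> E -> forall s t, f s = f t -> E s -> E t.
Proof.
move=> sE; pose Sat := [set A : set T | forall s t, f s = f t -> A s -> A t].
apply: (smallest_sub (X := Sat) _ _ sE) => [|_ [A _ <-] s t /= -> //].
split=> [//|A hA s t fst [_ nAs]|F hF s t fst [k _ Fks]].
- by split=> // At; apply: nAs; exact: (hA t s).
- by exists k => //; exact: (hF k s).
Qed.

Section measure_lemmas.
Context d (X : measurableType d) (R : realType) (mu : {measure set X -> \bar R}).
Local Open Scope ereal_scope.

Lemma measurable_symdiff (A B : set X) :
  measurable A -> measurable B -> measurable (symdiff A B).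
Proof. by move=> mA mB; apply: measurableU; exact: measurableD. Qed.

Lemma le_measure_setU2 (A B C : set X) : measurable A -> measurable B ->
  measurable C -> A `<=` B `|` C -> mu A <= mu B + mu C.
Proof.
move=> mA mB mC ABC; apply: le_trans (measureU2 mu mB mC).
by apply: le_measure => //; rewrite inE //; exact: measurableU.
Qed.

Lemma lte_add_half (a b : \bar R) (eps : R) :
  a < (eps / 2)%:E -> b < (eps / 2)%:E -> a + b < eps%:E.
Proof.
move=> ha hb; rewrite (_ : eps = eps / 2 + eps / 2)%R; last by field.
by rewrite EFinD; exact: lteD.
Qed.

Lemma measure_setD_eventually_lt (E : set X) (A : (set X)^nat) :
  measurable E -> mu E < +oo -> (forall n, measurable (A n)) ->
  nondecreasing_seq A -> E `<=` \bigcup_n A n ->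
  forall eps : R, (0 < eps)%R -> exists N, mu (E `\` A N) < eps%:E.
Proof.
move=> mE Eoo mA ndA EA eps eps0.
have mEA n : measurable (E `\` A n) by exact: measurableD.
have capEA : \bigcap_n (E `\` A n) = set0.
  apply/seteqP; split => // x Ex.
  have [n _ Anx] := EA x (Ex 0%N I).1.
  by have [] := Ex n I.
have niEA : nonincreasing_seq (fun n => E `\` A n).
  move=> n m nm; apply/subsetPset; apply: setDS.
  by have /subsetPset := ndA _ _ nm.
have EA0 : mu (E `\` A 0%N) < +oo.
  by apply: le_lt_trans Eoo; apply: le_measure; rewrite ?inE // => x [].
have := nonincreasing_cvg_mu EA0 mEA _ niEA; rewrite capEA measure0.
move=> /(_ measurable0 `]-oo, eps%:E[%classic) [|N _ hN].
  apply: open_nbhs_nbhs; split; first exact: lray_open.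
  by rewrite /= in_itv /= lte_fin.
by exists N; have := hN N (leqnn N); rewrite /= in_itv.
Qed.

Lemma measurable_lt_fun (g : X -> R) (a : R) :
  measurable_fun setT g -> measurable [set t | (a < g t)%R].
Proof.
move=> mg; have := mg measurableT _ (measurable_itv `]a, +oo[); rewrite setTI.
by congr measurable; apply/seteqP; split=> t /=; rewrite in_itv /= andbT.
Qed.

Lemma measure_gt_lty (g : X -> R) (c : R) : measurable_fun setT g ->
  (forall t, 0 <= g t)%R -> \int[mu]_t (g t)%:E < +oo -> (0 < c)%R ->
  mu [set t | (c < g t)%R] < +oo.
Proof.
move=> mg g0 gfin c0; set A := [set t | _].
have mA : measurable A := measurable_lt_fun c mg.
have mgE : measurable_fun setT (EFin \o g) by exact/measurable_EFinP.
have cA : c%:E * mu A <= \int[mu]_t (g t)%:E.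
  rewrite -integral_cst //; apply: (@le_trans _ _ (\int[mu]_(t in A) (g t)%:E)).
    apply: ge0_le_integral => //.
    - by move=> t _; rewrite lee_fin ltW.
    - exact: measurable_funS mgE.
    - by move=> t /ltW; rewrite lee_fin.
  by apply: ge0_subset_integral => // t _; rewrite lee_fin.
rewrite ltNge leye_eq; apply/negP => /eqP Aoo.
move: cA; rewrite Aoo mulry gtr0_sg // mul1e leye_eq.
by apply/negP; rewrite -ltey.
Qed.

Lemma measure_bigcup_ord_lty (F : (set X)^nat) n :
  (forall k, measurable (F k)) -> (forall k, mu (F k) < +oo) ->
  mu (\bigcup_(k < n) F k) < +oo.
Proof.
move=> mF Foo; elim: n => [|n IH].
  by rewrite bigcup_mkord big_ord0 measure0.
rewrite bigcup_mkord big_ord_recr /= -bigcup_mkord.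
apply: le_lt_trans (measureU2 _ _ _) (lte_add_pinfty IH (Foo n)) => //.
exact: bigcup_measurable.
Qed.

End measure_lemmas.

(* Boolean combinations of the [G i], coded by trees so that there are
   countably many when [I] is countable: [Node 0 [:: a]] is a complement,
   [Node 1 [:: a; b]] a union, and every other node the empty set. *)
Fixpoint setexpr {I T : Type} (G : I -> set T) (t : GenTree.tree I) : set T :=
  match t with
  | GenTree.Leaf i => G i
  | GenTree.Node 0 [:: a] => ~` setexpr G a
  | GenTree.Node 1 [:: a; b] => setexpr G a `|` setexpr G b
  | _ => set0
  end.

Lemma measurable_setexpr d (T : measurableType d) (I : Type) (G : I -> set T) :
  (forall i, measurable (G i)) -> forall t, measurable (setexpr G t).
Proof.
move=> mG; fix IH 1; case=> [i|[|[|n]] l] /=; first exact: mG.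
- by case: l => [|a [|b l]] //; exact/measurableC/IH.
- by case: l => [|a [|b [|c l]]] //; exact: measurableU.
- by [].
Qed.

Section setexpr_approximation.
Context d (X : measurableType d) (R : realType) (mu : {measure set X -> \bar R}).
Context (I : Type) (G : I -> set X) (S : set X).
Hypotheses (mG : forall i, measurable (G i)) (mS : measurable S).
Hypothesis Soo : (mu S < +oo)%E.

Definition setexpr_approximable (E : set X) := measurable E /\
  forall eps : R, 0 < eps ->
    exists t, (mu (symdiff E (setexpr G t) `&` S) < eps%:E)%E.

Let measurable_symdiffI E t : measurable E ->
  measurable (symdiff E (setexpr G t) `&` S).
Proof.
by move=> mE; apply: measurableI => //; apply: measurable_symdiff => //;
  exact: measurable_setexpr.
Qed.

Lemma setexpr_approximable0 : setexpr_approximable set0.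
Proof.
split=> // eps eps0; exists (GenTree.Node 2 [::]).
by rewrite /symdiff /= !set0D setU0 set0I measure0 lte_fin.
Qed.

Lemma setexpr_approximable_gen i : setexpr_approximable (G i).
Proof.
split=> // eps eps0; exists (GenTree.Leaf i).
by rewrite /symdiff /= setDv setU0 set0I measure0 lte_fin.
Qed.

Lemma setexpr_approximableC E :
  setexpr_approximable E -> setexpr_approximable (setT `\` E).
Proof.
move=> [mE apxE]; split; first exact: measurableD.
move=> eps eps0; have [t Et] := apxE _ eps0; exists (GenTree.Node 0 [:: t]).
by rewrite setTD symdiffCC.
Qed.

Lemma setexpr_approximableU E F : setexpr_approximable E ->
  setexpr_approximable F -> setexpr_approximable (E `|` F).
Proof.
move=> [mE apxE] [mF apxF]; have mEF := measurableU _ _ mE mF; split=> //.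
move=> eps eps0; have eps20 : 0 < eps / 2 by rewrite divr_gt0.
have [t1 Et1] := apxE _ eps20; have [t2 Ft2] := apxF _ eps20.
exists (GenTree.Node 1 [:: t1; t2]); apply: le_lt_trans (lte_add_half Et1 Ft2).
apply: le_measure_setU2; try exact: measurable_symdiffI.
move=> x [/(@symdiffUU _ E F (setexpr G t1) (setexpr G t2) x)[] ? Sx].
  by left.
by right.
Qed.

Lemma setexpr_approximable_bigcup_ord (F : (set X)^nat) :
  (forall k, setexpr_approximable (F k)) ->
  forall n, setexpr_approximable (\bigcup_(k < n) F k).
Proof.
move=> apxF; elim=> [|n IH].
  by rewrite bigcup_mkord big_ord0; exact: setexpr_approximable0.
rewrite bigcup_mkord big_ord_recr /= -bigcup_mkord.
exact: setexpr_approximableU.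
Qed.

Lemma setexpr_approximable_bigcup (F : (set X)^nat) :
  (forall k, setexpr_approximable (F k)) ->
  setexpr_approximable (\bigcup_k F k).
Proof.
move=> apxF; have mF k : measurable (F k) by have [] := apxF k.
have mUF : measurable (\bigcup_k F k) by exact: bigcupT_measurable.
split=> // eps eps0; have eps20 : 0 < eps / 2 by rewrite divr_gt0.
pose A n := \bigcup_(k < n) F k.
have mA n : measurable (A n) by apply: bigcup_measurable => k _.
have ndA : nondecreasing_seq A.
  move=> n m nm; apply/subsetPset => x [k /= kn Fkx].
  by exists k => //=; exact: leq_trans kn nm.
have UFSA : \bigcup_k F k `&` S `<=` \bigcup_n A n.
  by move=> x [[k _ Fkx] _]; exists k.+1 => //; exists k => /=.
have UFSoo : (mu (\bigcup_k F k `&` S) < +oo)%E.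
  apply: le_lt_trans Soo; apply: le_measure; rewrite ?inE //.
  exact: measurableI.
have [N hN] := measure_setD_eventually_lt (measurableI _ _ mUF mS) UFSoo mA
  ndA UFSA eps20.
have [t At] := (setexpr_approximable_bigcup_ord apxF N).2 _ eps20.
exists t; apply: le_lt_trans (lte_add_half hN At).
apply: le_measure_setU2.
- exact: measurable_symdiffI.
- by apply: measurableD => //; exact: measurableI.
- exact: measurable_symdiffI (mA N).
move=> x [/(@symdiff_triangle _ _ (A N) _ x) + Sx].
rewrite symdiff_setD; last by move=> y [k _ Fky]; exists k.
by case=> [[UFx nAx]|?]; [left|right].
Qed.

Lemma sigma_setexpr_approximable :
  <<s range G >> `<=` setexpr_approximable.
Proof.
apply: smallest_sub; last by move=> _ [i _ <-]; exact: setexpr_approximable_gen.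
split; [exact: setexpr_approximable0|exact: setexpr_approximableC|].
exact: setexpr_approximable_bigcup.
Qed.

End setexpr_approximation.

Section real_inner_product.
Context {R : realType} {H : completeNormedModType R} (hs : complex_hilbert H).
Implicit Types x y z : H.

Definition rip x y : R := complex.Re (ip hs x y).

Lemma rip_sym x y : rip x y = rip y x.
Proof. by rewrite /rip [ip hs y x]ip_conj; case: (ip hs x y). Qed.

Lemma rip_linl (r : R) x y z : rip (r *: x + y) z = r * rip x z + rip y z.
Proof.
rewrite /rip -(csc_real hs) ip_linl.
by case: (ip hs x z) => a b; case: (ip hs y z) => a' b' /=; rewrite mul0r subr0.
Qed.

Lemma rip_addl x y z : rip (x + y) z = rip x z + rip y z.
Proof. by have := rip_linl 1 x y z; rewrite scale1r mul1r. Qed.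

Lemma rip0l z : rip 0 z = 0.
Proof. by have := rip_addl 0 0 z; rewrite addr0; lra. Qed.

Lemma rip_scalel (r : R) x z : rip (r *: x) z = r * rip x z.
Proof. by rewrite -[r *: x]addr0 rip_linl rip0l addr0. Qed.

Lemma rip_subl x y z : rip (x - y) z = rip x z - rip y z.
Proof. by rewrite -scaleN1r addrC rip_linl mulN1r addrC. Qed.

Lemma rip0r z : rip z 0 = 0.
Proof. by rewrite rip_sym rip0l. Qed.

Lemma rip_scaler (r : R) x z : rip z (r *: x) = r * rip z x.
Proof. by rewrite rip_sym rip_scalel rip_sym. Qed.

Lemma rip_subr x y z : rip z (x - y) = rip z x - rip z y.
Proof. by rewrite rip_sym rip_subl !(rip_sym z). Qed.

Lemma rip_norm x : rip x x = `|x| ^+ 2.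
Proof. by rewrite /rip ip_norm. Qed.

Lemma rip_le x y : rip x y <= `|x| * `|y|.
Proof.
have [->|x0] := eqVneq x 0; first by rewrite rip0l normr0 mul0r.
have [->|y0] := eqVneq y 0; first by rewrite rip0r normr0 mulr0.
have ab0 : 0 < `|x| * `|y| by rewrite mulr_gt0 ?normr_gt0.
(* expand the nonnegative square |(|y| x - |x| y)|^2 *)
have := sqr_ge0 `|(`|y| *: x - `|x| *: y)|.
rewrite -rip_norm rip_subl !rip_subr !rip_scalel !rip_scaler !rip_norm.
by rewrite (rip_sym y x); nra.
Qed.

Lemma norm_rip_le x y : `|rip x y| <= `|x| * `|y|.
Proof.
rewrite ler_norml rip_le andbT lerNl -mulN1r -rip_scalel scaleN1r.
by rewrite -(normrN x) rip_le.
Qed.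

Lemma open_rip_gt f (c : R) : open [set y | c < `|rip f y|].
Proof.
rewrite openE => y /= cy; apply/nbhs_ballP; set a := `|rip f y|.
have f1 : 0 < `|f| + 1 by rewrite ltr_wpDl.
exists ((a - c) / (`|f| + 1)) => /=; first by rewrite divr_gt0 // subr_gt0.
move=> z; rewrite -ball_normE /ball_ /= => yz.
have : a - `|rip f z| <= `|rip f (y - z)| by rewrite rip_subr; exact: lerB_dist.
have := norm_rip_le f (y - z); have := normr_ge0 f; have := normr_ge0 (y - z).
have : (a - c) / (`|f| + 1) * (`|f| + 1) = a - c by rewrite divfK // gt_eqF.
by move: yz; set q := (a - c) / _; nra.
Qed.

End real_inner_product.

Section dense_sequence.
Context {R : realType} {H : completeNormedModType R} (hs : complex_hilbert H).
Variable e : nat -> H.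
Hypothesis e_dense : forall (y : H) (r : R), 0 < r -> exists n, `|e n - y| < r.

Lemma rip_dense_eq0 y : (forall n, rip hs (e n) y = 0) -> y = 0.
Proof.
move=> ey0; have [//|y0] := eqVneq y 0; exfalso.
have ypos : 0 < `|y| by rewrite normr_gt0.
have [n eny] := e_dense y (divr_gt0 ypos (@ltr0Sn _ 1)).
have := rip_le hs (y - e n) y; rewrite rip_subl ey0 subr0 rip_norm distrC.
by nra.
Qed.

Lemma ltr_norm_dense (c : R) y : 0 <= c ->
  c < `|y| <-> exists n, c * `|e n| < rip hs (e n) y.
Proof.
move=> c0; split=> [cy|[n cn]]; last first.
  by have := rip_le hs (e n) y; have := normr_ge0 (e n); nra.
(* it suffices that |e n - y| (b + c) < b (b - c), where b = |y| *)
set b := `|y| in cy *; set r := b * (b - c) / (2 * (b + c)).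
have bc0 : 0 < b + c by lra.
have rbc : r * (b + c) * 2 = b * (b - c) by rewrite /r; field; lra.
have r0 : 0 < r by rewrite /r divr_gt0 ?mulr_gt0; lra.
have [n eny] := e_dense y r0; exists n.
have := norm_rip_le hs (e n - y) y; rewrite ler_norml => /andP[lb _].
have : `|e n| <= b + `|e n - y|.
  by rewrite /b -[X in `|X|](subrK y) addrC ler_normD.
move: lb; rewrite rip_subl rip_norm -/b; set u := `|e n - y| in eny *.
have u0 : 0 <= u by rewrite normr_ge0.
clearbody r; nra.
Qed.

End dense_sequence.

Section dense_balls.
Context {R : realType} {V : normedModType R} (e : nat -> V).
Hypothesis e_dense : forall (y : V) (r : R), 0 < r -> exists n, `|e n - y| < r.

Definition dense_ball (p : nat * nat) : set V := ball (e p.1) p.2.+1%:R^-1.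

Lemma open_bigcup_dense_balls (U : set V) : open U ->
  U = \bigcup_(p in [set p | dense_ball p `<=` U]) dense_ball p.
Proof.
move=> oU; apply/seteqP; split=> [y Uy|y [p /= pU /pU //]].
have /nbhs_ballP[r /= r0 yrU] : nbhs y U by exact: open_nbhs_nbhs.
have [m] := ltr_add_invr (divr_gt0 r0 (@ltr0Sn _ 1)); rewrite add0r => mr.
have [n eny] : exists n, `|e n - y| < m.+1%:R^-1 by apply: e_dense.
exists (n, m); last by rewrite /dense_ball -ball_normE /ball_ /=.
move=> z; rewrite /dense_ball -ball_normE /ball_ /= => enz.
apply: yrU; rewrite -ball_normE /ball_ /=.
have := ler_distD (e n) y z; rewrite distrC in eny.
by move: mr eny enz; set q := m.+1%:R^-1; lra.
Qed.

End dense_balls.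

Section bessel_family.
Context {R : realType} {H : completeNormedModType R} (hs : complex_hilbert H).
Context d (X : measurableType d) (mu : {measure set X -> \bar R}) (phi : X -> H).
Hypothesis phi_bessel : continuous_bessel mu hs phi.
Variable e : nat -> H.
Hypothesis e_dense : forall (y : H) (r : R), 0 < r -> exists n, `|e n - y| < r.

Local Notation M' := <<s [set phi @^-1` U | U in [set U : set H | open U]] >>.

Let measurable_rip f : measurable_fun setT (fun t => rip hs f (phi t)).
Proof. by have [/(_ f)[]] := phi_bessel. Qed.

Lemma measurable_norm_subr x : measurable_fun setT (fun t => `|phi t - x|).
Proof.
apply: (measurability _ (RGenOInfty.measurableE R)) => // _ [_ [c ->] <-].
rewrite setTI; have [c0|c0] := leP 0 c; last first.
  rewrite (_ : _ @^-1` _ = setT) //; apply/seteqP; split=> // t _ /=.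
  by rewrite in_itv /= andbT (lt_le_trans c0).
rewrite (_ : _ @^-1` _ =
    \bigcup_n [set t | c * `|e n| < rip hs (e n) (phi t) - rip hs (e n) x]).
  apply: bigcupT_measurable => n; apply: measurable_lt_fun.
  by apply: measurable_funB => //; exact: measurable_cst.
apply/seteqP; split=> t; rewrite /= in_itv /= andbT.
  move/(ltr_norm_dense hs e_dense _ c0) => [n].
  by exists n => //=; rewrite -rip_subr.
move=> [n _ /=]; rewrite -rip_subr => cn.
by apply/(ltr_norm_dense hs e_dense _ c0); exists n.
Qed.

Lemma measurable_preimage_ball x r : measurable (phi @^-1` ball x r).
Proof.
have := measurable_norm_subr x measurableT (measurable_itv `]-oo, r[).
rewrite setTI; congr measurable; apply/seteqP; split=> t;
  by rewrite /= in_itv /= -ball_normE /ball_ /= distrC.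
Qed.

Definition preimage_dense_ball p := phi @^-1` dense_ball e p.

Lemma sigma_preimage_open_sub : M' `<=` <<s range preimage_dense_ball >>.
Proof.
apply: smallest_sub => // _ [U oU <-].
rewrite (open_bigcup_dense_balls e_dense oU) preimage_bigcup bigcup_mkcond.
apply: (@countable_bigcupT_measurable _
  (g_sigma_algebraType (range preimage_dense_ball))); first exact: countableP.
move=> p; case: ifPn => _; last exact: measurable0.
by apply: sub_sigma_algebra; exists p.
Qed.

Lemma sigma_preimage_open_measurable : M' `<=` measurable.
Proof.
move=> A /sigma_preimage_open_sub; apply: smallest_sub.
  exact: sigma_algebra_measurable.
by move=> _ [p _ <-]; exact: measurable_preimage_ball.
Qed.

Definition level_set f (c : R) : set X := [set t | c < `|rip hs f (phi t)|].

Lemma measurable_level_set f c : measurable (level_set f c).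
Proof.
apply: measurable_lt_fun.
by apply: measurableT_comp; [exact: normr_measurable|exact: measurable_rip].
Qed.

Lemma level_set_lty f c : 0 < c -> (mu (level_set f c) < +oo)%E.
Proof.
move=> c0; have [mip [B bessel]] := phi_bessel; have [mRe mIm] := mip f.
pose g t := sqmod (ip hs f (phi t)).
have mg : measurable_fun setT g by apply: measurable_funD; exact: measurable_funX.
have g0 t : 0 <= g t by rewrite addr_ge0 ?sqr_ge0.
have gfin : (\int[mu]_t (g t)%:E < +oo)%E.
  exact: le_lt_trans (bessel f) (ltry _).
apply: le_lt_trans (measure_gt_lty mg g0 gfin (exprn_gt0 2 c0)).
apply: le_measure; rewrite ?inE; first exact: measurable_level_set.
  exact: measurable_lt_fun.
move=> t /= ct; rewrite /g /sqmod -(real_normK (num_real (complex.Re _))).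
have := sqr_ge0 (complex.Im (ip hs f (phi t))).
by rewrite /level_set /rip /= in ct; nra.
Qed.

Definition supp_exhaust N : set X :=
  \bigcup_(n < N) level_set (e n) N.+1%:R^-1.

Lemma measurable_supp_exhaust N : measurable (supp_exhaust N).
Proof. by apply: bigcup_measurable => n _; exact: measurable_level_set. Qed.

Lemma supp_exhaust_lty N : (mu (supp_exhaust N) < +oo)%E.
Proof.
apply: measure_bigcup_ord_lty => n; first exact: measurable_level_set.
by apply: level_set_lty; rewrite invr_gt0.
Qed.

Lemma nondecreasing_supp_exhaust : nondecreasing_seq supp_exhaust.
Proof.
move=> N M NM; apply/subsetPset => t [n /= nN nt]; exists n => /=.
  exact: leq_trans nN NM.
by apply: le_lt_trans nt; rewrite lef_pV2 ?posrE // ler_nat ltnS.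
Qed.

Lemma bigcup_supp_exhaust : \bigcup_N supp_exhaust N = ~` (phi @^-1` [set 0]).
Proof.
apply/seteqP; split=> t.
  move=> [N _ [n _]]; rewrite /level_set /= => + phit0.
  by rewrite phit0 rip0r normr0 ltNge invr_ge0 ler0n.
move=> /= phit; have [n ent] : exists n, rip hs (e n) (phi t) != 0.
  apply: contrapT => /forallNP all0; apply/phit/(rip_dense_eq0 e_dense) => n.
  by apply/eqP/negPn/negP; exact: all0.
have [m] : exists m, 0 + m.+1%:R^-1 < `|rip hs (e n) (phi t)|.
  by apply: ltr_add_invr; rewrite normr_gt0.
rewrite add0r => mt; exists (maxn m n.+1) => //; exists n => /=.
  by rewrite leq_max ltnSn orbT.
by apply: le_lt_trans mt; rewrite lef_pV2 ?posrE // ler_nat ltnS leq_maxl.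
Qed.

Lemma sigma_supp_exhaust N : M' (supp_exhaust N).
Proof.
apply: sub_sigma_algebra.
exists (\bigcup_(n < N) [set y | N.+1%:R^-1 < `|rip hs (e n) y|]).
  by apply: bigcup_open => n _; exact: open_rip_gt.
by rewrite preimage_bigcup.
Qed.

Lemma sigma_setI_kernel E : M' E -> exists b : bool,
  E `&` phi @^-1` [set 0] = if b then phi @^-1` [set 0] else set0.
Proof.
move=> ME; have [[z [Ez /= phiz]]|nEZ] := pselect (exists z, E z /\ phi z = 0).
  exists true; apply/seteqP; split=> [t []//|t /= phit]; split=> //.
  by apply: (sigma_preimage_saturated ME (s := z)); rewrite ?phiz.
by exists false; apply/seteqP; split=> // t [Et phit]; apply: nEZ; exists t.
Qed.

Lemma sigma_preimage_dense_ball p : M' (preimage_dense_ball p).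
Proof.
by apply: sub_sigma_algebra; exists (dense_ball e p) => //; exact: ball_open.
Qed.

Lemma sigma_kernel : M' (phi @^-1` [set 0]).
Proof.
rewrite -[_ @^-1` _]setCK -bigcup_supp_exhaust.
apply: sigma_algebraC; apply: sigma_algebra_bigcup => N.
exact: sigma_supp_exhaust.
Qed.

Definition dense_family_set (x : GenTree.tree (nat * nat) * nat * bool) : set X :=
  (setexpr preimage_dense_ball x.1.1 `&` supp_exhaust x.1.2) `|`
  (if x.2 then phi @^-1` [set 0] else set0).

Lemma sigma_dense_family_set x : M' (dense_family_set x).
Proof.
apply: (@measurableU _ (g_sigma_algebraType _)).
  apply: (@measurableI _ (g_sigma_algebraType _)); last exact: sigma_supp_exhaust.
  by apply: measurable_setexpr; exact: sigma_preimage_dense_ball.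
by case: x.2; [exact: sigma_kernel|exact: measurable0].
Qed.

Lemma dense_family_set_approx E : M' E -> (mu E < +oo)%E ->
  forall eps : R, 0 < eps -> exists2 x, (mu (dense_family_set x) < +oo)%E &
    (mu (symdiff E (dense_family_set x)) < eps%:E)%E.
Proof.
move=> ME Eoo eps eps0; have eps20 : 0 < eps / 2 by rewrite divr_gt0.
have mE := sigma_preimage_open_measurable ME.
set Z := phi @^-1` [set 0].
have mEZ : measurable (E `&` ~` Z).
  apply/measurableI/measurableC => //.
  exact: sigma_preimage_open_measurable sigma_kernel.
have [b EZ] := sigma_setI_kernel ME.
have [N hN] : exists N, (mu ((E `&` ~` Z) `\` supp_exhaust N) < (eps / 2)%:E)%E.
  apply: measure_setD_eventually_lt => //.
  - by apply: le_lt_trans Eoo; apply: le_measure; rewrite ?inE // => ? [].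
  - exact: measurable_supp_exhaust.
  - exact: nondecreasing_supp_exhaust.
  - by rewrite bigcup_supp_exhaust => t [].
have mS := measurable_supp_exhaust N.
have [t ht] := (sigma_setexpr_approximable (mu := mu)
  (fun p => measurable_preimage_ball _ _) mS (supp_exhaust_lty N)
  (sigma_preimage_open_sub ME)).2 _ eps20.
have mC : measurable (setexpr preimage_dense_ball t).
  by apply: measurable_setexpr => p; exact: measurable_preimage_ball.
have mF := sigma_preimage_open_measurable (sigma_dense_family_set (t, N, b)).
exists (t, N, b).
  apply: le_lt_trans (lte_add_pinfty (supp_exhaust_lty N) Eoo).
  apply: le_measure_setU2 => //.
  by rewrite /dense_family_set /= -EZ => ? [[_ ?]|[]]; [left|right].
apply: le_lt_trans (lte_add_half ht hN).
apply: le_measure_setU2; [exact: measurable_symdiff| |exact: measurableD|].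
  by apply: measurableI => //; exact: measurable_symdiff.
rewrite /dense_family_set /= -EZ; apply: symdiff_patch.
by rewrite -bigcup_supp_exhaust; exact: bigcup_sup.
Qed.

Lemma preimage_measure_algebra_separable : measure_algebra_separable M' mu.
Proof.
exists (range dense_family_set `&` [set E | M' E /\ (mu E < +oo)%E]); split.
  apply: sub_countable (subset_card_le (@subIsetl _ _ _)) _.
  exact: card_le_trans (card_image_le _ setT) (countableP _).
split=> [E [_ //]|E ME Eoo eps eps0].
have [x Fx EFx] := dense_family_set_approx ME Eoo eps0.
exists (dense_family_set x) => //; split; first by exists x.
by split=> //; exact: sigma_dense_family_set.
Qed.

End bessel_family.

Lemma separable_dense_seq (R : realType) (V : normedModType R) :
  separable_space V ->
  exists e : nat -> V, forall (y : V) (r : R), 0 < r -> exists n, `|e n - y| < r.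
Proof.
move=> [D [/pcard_surjP[e eD] clD]]; exists e => y r r0.
have : closure D y by rewrite clD.
move=> /(_ (ball y r) (nbhsx_ballx _ _ r0)) [x [Dx yx]].
have [n _ enx] := eD x Dx.
by exists n; move: yx; rewrite -ball_normE /ball_ /= -enx distrC.
Qed.

Theorem proposition2p3 (R : realType) (H : completeNormedModType R)
  (hs : complex_hilbert H) (d : measure_display) (X : measurableType d)
  (mu : {measure set X -> \bar R}) (phi : X -> H) :
  separable_space H ->
  sigma_finite setT mu ->
  continuous_bessel mu hs phi ->
  measure_algebra_separable
    (smallest (sigma_algebra setT)
       [set phi @^-1` U | U in [set U : set H | open U]])
    mu.
Proof.
move=> /separable_dense_seq[e e_dense] _ phi_bessel.
exact (preimage_measure_algebra_separable phi_bessel e_dense).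
Qed.
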